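(* Let $T$ be a countable tree with at least one vertex of infinite degree, and let $H$ be a countable graph in which every vertex has infinite degree. Then for every $v\in V(H)$, $H$ contains a subgraph isomorphic to $T$ whose vertex set contains $N_H(v)$.
   Context: $N_H(v)$ denotes the set of neighbors of $v$ in $H$. *)

From mathcomp Require Import all_boot.
From mathcomp Require Import boolp classical_sets functions cardinality.
From Stdlib Require Import List.
Set Implicit Arguments. Unset Strict Implicit. Unset Printing Implicit Defensive.
Local Open Scope classical_set_scope.

Definition simple_graph (V : Type) (adj : V -> V -> Prop) : Prop :=
  (forall x y, adj x y -> adj y x) /\ (forall x, ~ adj x x).

Fixpoint walk (V : Type) (adj : V -> V -> Prop) (x : V) (s : list V) : Prop :=
  match s with
  | nil => True
  | y :: s' => adj x y /\ walk adj y s'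
  end.

Definition connected_graph (V : Type) (adj : V -> V -> Prop) : Prop :=
  forall x y : V, exists s : list V, walk adj x s /\ List.last s x = y.

Definition has_cycle (V : Type) (adj : V -> V -> Prop) : Prop :=
  exists (x : V) (s : list V),
    2 <= length s /\ NoDup (x :: s) /\ walk adj x s /\ adj (List.last s x) x.

Definition is_tree (V : Type) (adj : V -> V -> Prop) : Prop :=
  simple_graph adj /\ connected_graph adj /\ ~ has_cycle adj.

Definition nbhd (V : Type) (adj : V -> V -> Prop) (v : V) : set V := [set u | adj v u].

Definition infinite_degree (V : Type) (adj : V -> V -> Prop) (v : V) : Prop :=
  infinite_set (nbhd adj v).

(* H contains a subgraph isomorphic to T whose vertex set contains N_H(v):
   an injective, edge-preserving map f : V(T) -> V(H) whose image contains N_H(v). *)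
Definition tree_embedding_covering (VT VH : Type) (eT : VT -> VT -> Prop)
    (eH : VH -> VH -> Prop) (f : VT -> VH) (v : VH) : Prop :=
  injective f /\ (forall x y, eT x y -> eH (f x) (f y)) /\ nbhd eH v `<=` range f.

(* Root the tree T at a vertex t of infinite degree.  Distances from t give a
   rank d and a parent map p with d (p x) < d x, and since T has no cycle every
   edge of T joins a non-root vertex to its parent (tree_rooting).  A partial
   embedding is a finite parent-closed set of vertices containing t, mapped
   injectively with t sent to v and every other vertex sent to a neighbour of
   the image of its parent.  It can be extended to contain any given vertex x,
   adding the ancestors of x one by one, each to an unused neighbour of its
   parent's image (H has infinite degrees, the image is finite); and to cover
   any neighbour w of v, by sending w an unused child of t (t has infinite
   degree).  Enumerating V(T) and V(H) and doing both at each stage produces an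
   increasing sequence of partial embeddings whose union is the required
   embedding. *)

From mathcomp Require Import all_boot.
From mathcomp Require Import boolp classical_sets functions cardinality.
From mathcomp Require Import zify.
From Stdlib Require Import List.
Local Open Scope classical_set_scope.
Set Implicit Arguments. Unset Strict Implicit.

Section Walks.
Variables (V : Type) (adj : V -> V -> Prop).

Lemma last_cons (a : V) l d : List.last (a :: l) d = List.last l a.
Proof.
by elim: l a d => [|b l IH] a d //; rewrite -[LHS]/(List.last (b :: l) d) !IH.
Qed.

Lemma last_app (l1 l2 : list V) d :
  List.last (app l1 l2) d = List.last l2 (List.last l1 d).
Proof.
by elim: l1 d => [|a l1 IH] d //; rewrite -[app _ _]/(a :: app l1 l2) !last_cons IH.
Qed.

Lemma walk_app x (s1 s2 : list V) :
  walk adj x (app s1 s2) <-> walk adj x s1 /\ walk adj (List.last s1 x) s2.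
Proof.
elim: s1 x => [|a s1 IH] x; first by rewrite /=; tauto.
by rewrite last_cons /= IH; tauto.
Qed.

Hypothesis adj_sym : forall x y, adj x y -> adj y x.

Lemma walk_rev (s : list V) a b :
  walk adj a (app s [:: b]) -> walk adj b (app (List.rev s) [:: a]).
Proof.
elim: s a => [|c s IH] a /= [hac hwalk]; first by split=> //; apply: adj_sym.
apply/walk_app; split; first exact: IH.
by rewrite last_last /=; split=> //; apply: adj_sym.
Qed.

Lemma walk_join a s1 s2 : walk adj a s1 -> walk adj a s2 ->
  exists s, [/\ walk adj (List.last s1 a) s,
    List.last s (List.last s1 a) = List.last s2 a &
    forall w, In w s -> [\/ In w s1, w = a | In w s2]].
Proof.
move=> + w2; have [->|/exists_last [s' [b ->]] w1] := pselect (s1 = nil).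
  by exists s2; split=> // w; constructor 3.
exists (app (List.rev s') (a :: s2)); rewrite last_last; split.
- rewrite -[a :: s2]/(app [:: a] s2) app_assoc; apply/walk_app.
  by rewrite last_last; split=> //; exact: walk_rev.
- by rewrite last_app last_cons.
- move=> w /in_app_iff [ws'|/= [<-|ws2]].
  + by constructor 1; apply/in_app_iff; left; apply/List.in_rev.
  + by constructor 2.
  + by constructor 3.
Qed.

Lemma walk_loop_erase a s : walk adj a s -> exists r,
  [/\ walk adj a r, List.last r a = List.last s a, NoDup (a :: r) & incl r s].
Proof.
elim: s a => [|y s IH] a.
  by exists nil; split=> //; repeat constructor.
move=> [hay /IH [r [wr lr nd inc]]]; rewrite last_cons.
have [[ya|ar]|anr] := pselect (In a (y :: r)).
- subst y; exists r; split=> // w /inc; exact: in_cons.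
- have [r1 [r2 E]] := List.in_split _ _ ar; subst r.
  move: wr => /walk_app [_ [_ w2]].
  exists r2; split=> //.
  + by rewrite -lr last_app last_cons.
  + by move: nd; rewrite app_comm_cons => /NoDup_app_remove_l.
  + by move=> w h; right; apply: inc; rewrite in_app_iff /=; tauto.
- exists (y :: r); split=> //; first by rewrite last_cons.
  + by constructor.
  + by move=> w [->|/inc h]; [left|right].
Qed.

End Walks.

Section RootedTree.
Variables (VT : Type) (eT : VT -> VT -> Prop) (t : VT).
Hypotheses (eT_sym : forall x y, eT x y -> eT y x) (eT_irrefl : forall x, ~ eT x x).
Hypothesis eT_acyclic : ~ has_cycle eT.

Definition reach n x :=
  exists s, [/\ walk eT t s, List.last s t = x & length s = n].

Variable depth : VT -> nat.
Hypothesis depthP : forall x, reach (depth x) x /\ forall m, reach m x -> depth x <= m.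

Lemma depth_root : depth t = 0.
Proof. by apply/eqP; rewrite -leqn0; apply: (proj2 (depthP t)); exists nil. Qed.

Lemma depth_eq0 x : depth x = 0 -> x = t.
Proof.
move=> d0; have [[[|y s] [_ ls len]] _] := depthP x; first by rewrite -ls.
by rewrite d0 in len.
Qed.

Lemma depth_on_geodesic s z w :
  walk eT t s -> List.last s t = z -> length s = depth z ->
  In w s -> w = z \/ depth w < depth z.
Proof.
move=> ws ls len /(List.in_split w s) [s1 [s2 E]]; subst s.
have dw : depth w <= (length s1).+1.
  apply: (proj2 (depthP w)); exists (app s1 [:: w]).
  move: ws => /walk_app [w1 /= [hw _]].
  rewrite last_last length_app /=; split=> //; last by lia.
  by apply/walk_app; split.
case: s2 ws ls len => [|b s2] _ ls len; first by left; rewrite -ls last_app.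
by right; rewrite -len length_app /=; lia.
Qed.

Lemma closer_neighbour x : x <> t -> exists y, eT y x /\ depth y < depth x.
Proof.
move=> xt; have [[s [ws ls len]] _] := depthP x.
have /exists_last [s' [b E]] : s <> nil by move=> E; apply: xt; rewrite -ls E.
subst s; rewrite last_last in ls; subst b.
move: ws => /walk_app [ws' [hy _]].
exists (List.last s' t); split=> //.
have : depth (List.last s' t) <= length s' by apply: (proj2 (depthP _)); exists s'.
by rewrite -len length_app /=; lia.
Qed.

(* Otherwise shortest
   walks from [t] to [q] and to [y] yield a path from [q] to [y] avoiding [x],
   which closes up into a cycle through [x]. *)
Lemma closer_neighbour_unique x q y :
  eT q x -> depth q < depth x -> eT x y -> depth y <= depth x -> y = q.
Proof.
move=> hqx dq hxy dy; apply: contrapT => yq; apply: eT_acyclic.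
have [[sq [wq lq nq]] _] := depthP q; have [[sy [wy ly ny]] _] := depthP y.
have [s [ws ls ins]] := walk_join eT_sym wq wy; rewrite lq ly in ws ls.
have [r [wr lr nd inc]] := walk_loop_erase ws.
have xt : x <> t by move=> E; move: dq; rewrite E depth_root.
have x_off : ~ In x (q :: r).
  move=> [E|/inc /ins [hs|E|hs]]; first by move: hqx; rewrite E; apply: eT_irrefl.
  - have [E|] := depth_on_geodesic wq lq nq hs; last by lia.
    by move: hqx; rewrite E; apply: eT_irrefl.
  - by apply: xt.
  - have [E|] := depth_on_geodesic wy ly ny hs; last by lia.
    by move: hxy; rewrite E; apply: eT_irrefl.
exists x, (q :: r); split; last split; last split.
- by case: r {wr nd inc x_off} lr => [|b r] /= lr; [case: yq; rewrite -ls -lr|lia].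
- by constructor.
- by split=> //; apply: eT_sym.
- by rewrite last_cons lr ls; apply: eT_sym.
Qed.

End RootedTree.

Definition rooting (V : Type) (e : V -> V -> Prop) (t : V) (p : V -> V) (d : V -> nat) :=
  (forall x, x <> t -> d (p x) < d x) /\
  (forall x y, e x y -> (x <> t /\ y = p x) \/ (y <> t /\ x = p y)).

(* Every tree can be rooted at any vertex: take [d] the distance to the root
   and [p x] a neighbour of [x] closer to the root. *)
Lemma tree_rooting (V : Type) (e : V -> V -> Prop) (t : V) :
  is_tree e -> exists p d, rooting e t p d.
Proof.
move=> [[esym eirr] [econn eacyc]].
have /choice [d dP] :
    forall x, exists n, reach e t n x /\ forall m, reach e t m x -> n <= m.
  move=> x; have [s [ws ls]] := econn t x.
  have reach_s : exists n, `[< reach e t n x >] by exists (length s); apply/asboolP; exists s.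
  case: (ex_minnP reach_s) => n /asboolP rn nmin.
  by exists n; split=> // m rm; apply: nmin; apply/asboolP.
have /choice [p pP] : forall x, exists y, x <> t -> e y x /\ d y < d x.
  move=> x; have [->|xt] := pselect (x = t); first by exists t.
  by have [y hy] := closer_neighbour dP xt; exists y.
exists p, d; split=> [x /pP [] //|x y hxy].
have [dyx|dxy] := leqP (d y) (d x).
- have xt : x <> t.
    move=> E; subst x; move: dyx; rewrite (depth_root dP) leqn0 => /eqP /(depth_eq0 dP) E.
    by subst y; apply: (eirr t).
  have [hpx dpx] := pP x xt.
  by left; split=> //; exact: (closer_neighbour_unique esym eirr eacyc dP hpx dpx hxy dyx).
- have yt : y <> t by move=> E; move: dxy; rewrite E (depth_root dP).
  have [hpy dpy] := pP y yt.
  right; split=> //.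
  exact: (closer_neighbour_unique esym eirr eacyc dP hpy dpy (esym _ _ hxy) (ltnW dxy)).
Qed.

Lemma chain_choice (A : Type) (P : A -> Prop) (R : nat -> A -> A -> Prop) (a0 : A) :
  P a0 -> (forall n a, P a -> exists b, P b /\ R n a b) ->
  exists s : nat -> A, forall n, P (s n) /\ R n (s n) (s n.+1).
Proof.
move=> Pa0 step.
have /choice [next nextP] : forall na : nat * A, exists b, P na.2 -> P b /\ R na.1 na.2 b.
  move=> [n a]; have [Pa|nPa] := pselect (P a); last by exists a.
  by have [b hb] := step n a Pa; exists b.
pose s := fix s n := if n is m.+1 then next (m, s m) else a0.
have Ps n : P (s n) by elim: n => //= n IH; have [] := nextP (n, s n) IH.
by exists s => n; split=> //; exact: (nextP (n, s n) (Ps n)).2.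
Qed.

Lemma countable_enum (T : Type) (x : T) :
  countable [set: T] -> exists g : nat -> T, forall y, exists n, g n = y.
Proof.
case/pfcard_geP => [/seteqP [/(_ x I) //]|/surjfunPex [g gE]].
exists g => y; have : range g y by rewrite -gE.
by case=> n _ <-; exists n.
Qed.

Section PartialEmbeddings.
Variables (VT VH : Type) (eT : VT -> VT -> Prop) (eH : VH -> VH -> Prop).
Variables (t : VT) (v : VH) (p : VT -> VT) (d : VT -> nat).
Hypothesis rooted : rooting eT t p d.
Hypothesis eH_infinite : forall u, infinite_degree eH u.

Definition partial_embedding (S : set VT) (f : VT -> VH) : Prop :=
  [/\ finite_set S, S t, f t = v,
      forall x, S x -> x <> t -> S (p x) /\ eH (f (p x)) (f x)
    & forall x y, S x -> S y -> f x = f y -> x = y].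

Definition extends (S : set VT) (f : VT -> VH) (S' : set VT) (f' : VT -> VH) :=
  S `<=` S' /\ forall x, S x -> f' x = f x.

Lemma extends_refl S f : extends S f S f.
Proof. by split. Qed.

Lemma extends_trans S1 f1 S2 f2 S3 f3 :
  extends S1 f1 S2 f2 -> extends S2 f2 S3 f3 -> extends S1 f1 S3 f3.
Proof.
move=> [sub12 e12] [sub23 e23]; split=> [x /sub12 /sub23 //|x S1x].
by rewrite e23 ?e12 //; apply: sub12.
Qed.

Definition update (f : VT -> VH) (x : VT) (u : VH) : VT -> VH :=
  fun y => if pselect (y = x) then u else f y.

Lemma add_vertex S f x u :
  partial_embedding S f -> ~ S x -> x <> t -> S (p x) ->
  ~ (f @` S) u -> eH (f (p x)) u ->
  partial_embedding (S `|` [set x]) (update f x u) /\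
  extends S f (S `|` [set x]) (update f x u).
Proof.
move=> [finS St ft parS injS] Sx xt Spx fresh hu.
have upd_old y : S y -> update f x u y = f y.
  by move=> Sy; rewrite /update; case: pselect => // E; subst y.
have upd_new : update f x u x = u by rewrite /update; case: pselect.
split; last by split=> [y Sy|y /upd_old]; [left|].
split.
- by rewrite finite_setU; split.
- by left.
- by rewrite upd_old.
- move=> y [Sy|->] yt.
  + by have [Spy ey] := parS y Sy yt; rewrite !upd_old //; split=> //; left.
  + by rewrite upd_new upd_old //; split=> //; left.
- move=> y z [Sy|->] [Sz|->].
  + by rewrite !upd_old //; apply: injS.
  + by rewrite upd_new upd_old // => E; case: fresh; exists y.
  + by rewrite upd_new upd_old // => E; case: fresh; exists z.
  + by [].
Qed.

(* Since vertices of [H] have infinite degree and the image of a partial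
   embedding is finite, any vertex of [T] can be added, ancestors first
   (induction on the rank [d]). *)
Lemma extend_to_vertex S f x : partial_embedding S f ->
  exists S' f', [/\ partial_embedding S' f', extends S f S' f' & S' x].
Proof.
move=> emb; have [n dx] : exists n, d x < n by exists (d x).+1.
elim: n x dx => // n IH x dx.
have [->|xt] := pselect (x = t).
  by exists S, f; split=> //; [exact: extends_refl|case: emb].
have [S1 [f1 [emb1 ext1 S1px]]] := IH (p x) (leq_trans (proj1 rooted x xt) dx).
have [S1x|S1x] := pselect (S1 x); first by exists S1, f1.
have fin1 : finite_set (f1 @` S1) by apply: finite_image; case: emb1.
have /infinite_setN0 [u [hu fresh]] := infinite_setD (@eH_infinite (f1 (p x))) fin1.
have [emb2 ext2] := add_vertex emb1 S1x xt S1px fresh hu.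
by exists (S1 `|` [set x]), (update f1 x u); split=> //; [exact: extends_trans ext2|right].
Qed.

(* Since the root has infinite degree in [T], some child of the root lies
   outside [S]; sending it to [w] covers any unused neighbour [w] of [v]. *)
Lemma extend_to_cover S f w : infinite_degree eT t ->
  partial_embedding S f -> eH v w ->
  exists S' f', [/\ partial_embedding S' f', extends S f S' f' & (f' @` S') w].
Proof.
move=> t_inf emb hw; have [used|fresh] := pselect ((f @` S) w).
  by exists S, f; split=> //; exact: extends_refl.
have [finS St ft _ _] := emb.
have /infinite_setN0 [x [tx Sx]] := infinite_setD t_inf finS.
have [[//]|[xt tpx]] := proj2 rooted t x tx.
rewrite tpx in St; rewrite -ft tpx in hw.
have [emb' ext'] := add_vertex emb Sx xt St fresh hw.
exists (S `|` [set x]), (update f x w); split=> //.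
by exists x; [right|rewrite /update; case: pselect].
Qed.

Lemma root_embedding : partial_embedding [set t] (fun=> v).
Proof. by split=> // x y -> ->. Qed.

Lemma extend_stage S f x w : infinite_degree eT t -> partial_embedding S f ->
  exists S' f', [/\ partial_embedding S' f', extends S f S' f', S' x
    & eH v w -> (f' @` S') w].
Proof.
move=> t_inf emb; have [S1 [f1 [emb1 ext1 S1x]]] := extend_to_vertex x emb.
have [hw|nhw] := pselect (eH v w); last by exists S1, f1; split.
have [S2 [f2 [emb2 ext2 cov]]] := extend_to_cover t_inf emb1 hw.
by exists S2, f2; split=> //; [exact: extends_trans ext2|exact: (proj1 ext2)].
Qed.

Lemma limit_embedding (s : nat -> set VT * (VT -> VH)) :
  (forall x y, eH x y -> eH y x) ->
  (forall n, partial_embedding (s n).1 (s n).2) ->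
  (forall n, extends (s n).1 (s n).2 (s n.+1).1 (s n.+1).2) ->
  (forall x, exists n, (s n).1 x) ->
  exists f : VT -> VH, [/\ injective f, forall x y, eT x y -> eH (f x) (f y)
    & forall n x, (s n).1 x -> f x = (s n).2 x].
Proof.
move=> eH_sym emb step /choice [k kP].
have mono m n : m <= n -> extends (s m).1 (s m).2 (s n).1 (s n).2.
  elim: n => [|n IH]; first by rewrite leqn0 => /eqP ->; exact: extends_refl.
  rewrite leq_eqVlt => /orP [/eqP ->|]; first exact: extends_refl.
  by rewrite ltnS => /IH ext; exact: extends_trans ext (step n).
pose f x := (s (k x)).2 x.
have fE n x : (s n).1 x -> f x = (s n).2 x.
  by move=> Snx; have [le|/ltnW le] := leqP (k x) n; rewrite /f (proj2 (mono _ _ le)).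
have common x y : (s (maxn (k x) (k y))).1 x /\ (s (maxn (k x) (k y))).1 y.
  by split; [apply: (proj1 (mono _ _ (leq_maxl _ _)))
             |apply: (proj1 (mono _ _ (leq_maxr _ _)))].
exists f; split=> // [x y|x y hxy]; have [Sx Sy] := common x y;
  have [_ _ _ par inj] := emb (maxn (k x) (k y)); rewrite !(fE _ _ Sx) !(fE _ _ Sy).
- exact: inj.
- case: (proj2 rooted x y hxy) => [[xt E]|[yt E]].
  + by apply: eH_sym; have := (par x Sx xt).2; rewrite -E.
  + by have := (par y Sy yt).2; rewrite -E.
Qed.

End PartialEmbeddings.

Theorem mainTheorem13 (VT VH : Type) (eT : VT -> VT -> Prop) (eH : VH -> VH -> Prop)
  (hTcount : countable [set: VT]) (hTtree : is_tree eT)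
  (hTinf : exists t : VT, infinite_degree eT t)
  (hHcount : countable [set: VH]) (hHgraph : simple_graph eH)
  (hHinf : forall u : VH, infinite_degree eH u) :
  forall v : VH, exists f : VT -> VH, tree_embedding_covering eT eH f v.
Proof.
move=> v; have [t t_inf] := hTinf.
have [p [d rooted]] := tree_rooting t hTtree.
have [g g_onto] := countable_enum t hTcount.
have [w w_onto] := countable_enum v hHcount.
pose stage n (st st' : set VT * (VT -> VH)) := [/\ extends st.1 st.2 st'.1 st'.2,
  st'.1 (g n) & eH v (w n) -> (st'.2 @` st'.1) (w n)].
have step n st : partial_embedding eH t v p st.1 st.2 ->
    exists st', partial_embedding eH t v p st'.1 st'.2 /\ stage n st st'.
  move=> /(extend_stage rooted hHinf (g n) (w n) t_inf) [S' [f' [? ? ? ?]]].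
  by exists (S', f').
have [s stages] := chain_choice (a0 := ([set t], fun=> v)) (root_embedding eH t v p) step.
have [f [f_inj f_edge fE]] : exists f : VT -> VH, [/\ injective f,
    forall x y, eT x y -> eH (f x) (f y) & forall n x, (s n).1 x -> f x = (s n).2 x].
  apply: (limit_embedding rooted (proj1 hHgraph)) => [n|n|x]; first exact: (stages n).1.
    by have [] := (stages n).2.
  by have [n <-] := g_onto x; exists n.+1; have [] := (stages n).2.
exists f; split=> //; split=> // u vu; have [n wn] := w_onto u; subst u.
have [_ _ /(_ vu) [x Sx <-]] := (stages n).2.
by exists x => //; apply: fE.
Qed.
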